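(* Let $\mathcal{P}$ be a uniformly induced Lubell-bounded poset other than $\mathcal{C}_1$. Then $\mathrm{RR}(\vee_2:\mathcal{P})=2e(\mathcal{P})+1$.
   Context: $\mathcal{B}_n$ denotes the Boolean lattice of all subsets of $[n]$ ordered by inclusion; its $k$-th level is $\binom{[n]}{k}$, the family of $k$-element subsets. An induced copy of a poset $\mathcal{P}$ in a poset $\mathcal{Q}$ is the image of an injection $f:\mathcal{P}\to\mathcal{Q}$ with $f(X)\le f(Y)$ iff $X\le Y$; a family is induced $\mathcal{P}$-free if it contains no induced copy of $\mathcal{P}$. $\mathcal{C}_1$ is the one-element poset. $\vee_2$ is the poset on $X_0,X_1,X_2$ with $X_0<X_1$, $X_0<X_2$, $X_1,X_2$ incomparable. $e(\mathcal{P})$ is the largest integer $m$ such that for every $n$, the union of any $m$ consecutive levels of $\mathcal{B}_n$ is induced $\mathcal{P}$-free. For $\mathcal{F}\subseteq\mathcal{B}_n$, $\mathrm{lu}_n(\mathcal{F})=\sum_{F\in\mathcal{F}}\binom{n}{|F|}^{-1}$, and $\mathrm{Lu}_n(\mathcal{P})$ is the maximum of $\mathrm{lu}_n(\mathcal{F})$ over induced $\mathcal{P}$-free $\mathcal{F}\subseteq\mathcal{B}_n$. $\mathcal{P}$ is uniformly induced Lubell-bounded if $e(\mathcal{P})\ge \mathrm{Lu}_n(\mathcal{P})$ for all positive integers $n$. Monochromatic: all sets share a color; rainbow: pairwise distinct colors. $\mathrm{RR}(\mathcal{Q}:\mathcal{P})$ is the smallest $n$ such that every coloring (with any number of colors)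 of the sets of $\mathcal{B}_n$ contains a rainbow induced copy of $\mathcal{Q}$ or a monochromatic induced copy of $\mathcal{P}$. *)

From HB Require Import structures.
From mathcomp Require Import all_boot all_order all_algebra.
Set Implicit Arguments. Unset Strict Implicit. Unset Printing Implicit Defensive.
Import Order.TTheory GRing.Theory Num.Theory.

(* B_n = {set 'I_n} ordered by \subset.
   A (finite) poset P is a finPOrderType. *)

Section Defs.
Variables (d : Order.disp_t) (P : finPOrderType d).

Definition induced_copy (n : nat) (f : {ffun P -> {set 'I_n}}) : bool :=
  injectiveb f && [forall x : P, forall y : P, (f x \subset f y) == (x <= y)%O].

Definition induced_free (n : nat) (F : {set {set 'I_n}}) : bool :=
  ~~ [exists f : {ffun P -> {set 'I_n}}, induced_copy f && [forall x, f x \in F]].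

Definition levels (n k m : nat) : {set {set 'I_n}} :=
  [set A : {set 'I_n} | k <= #|A| < k + m].

Definition levels_free (m : nat) : Prop :=
  forall n k : nat, induced_free (levels n k m).

Definition is_e (m : nat) : Prop :=
  levels_free m /\ forall m', m < m' -> ~ levels_free m'.

Definition lu (n : nat) (F : {set {set 'I_n}}) : rat :=
  (\sum_(A in F) ('C(n, #|A|)%:R)^-1)%R.

(* Lu_n(P) : maximum of lu over induced P-free families (all values >= 0) *)
Definition Lu (n : nat) : rat :=
  (\big[Num.max/0%R]_(F : {set {set 'I_n}} | induced_free F) lu F)%R.

Definition unif_lubell_bounded : Prop :=
  forall m, is_e m -> forall n, 0 < n -> (Lu n <= m%:R)%R.

(* rainbow induced copy of V_2 in B_n under coloring c: images A0,A1,A2 of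
   X0,X1,X2 with A0 < A1, A0 < A2, A1 and A2 incomparable, distinct colors *)
Definition rainbow_V2 (n : nat) (C : eqType) (c : {set 'I_n} -> C) : Prop :=
  exists A0 A1 A2 : {set 'I_n},
    [/\ A0 \proper A1, A0 \proper A2, ~~ (A1 \subset A2), ~~ (A2 \subset A1)
      & [/\ c A0 != c A1, c A0 != c A2 & c A1 != c A2]].

Definition mono_P (n : nat) (C : eqType) (c : {set 'I_n} -> C) : Prop :=
  exists f : {ffun P -> {set 'I_n}}, induced_copy f /\ forall x y, c (f x) = c (f y).

Definition RR_prop (n : nat) : Prop :=
  forall (C : eqType) (c : {set 'I_n} -> C), rainbow_V2 c \/ mono_P c.

Definition is_RR (N : nat) : Prop :=
  RR_prop N /\ forall n, n < N -> ~ RR_prop n.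

End Defs.

(* Colour B_(2e+1) without a rainbow induced V_2 and let a be the
   colour of the empty set.  Two sets whose colours differ from each other and
   from a are comparable, for otherwise they form a rainbow V_2 with the empty
   set.  So either the proper subsets of [n] carry at most one colour besides a,
   or some set I with 0 < |I| < n is comparable with every set not coloured a.
   Since lu(B_n) = n + 1, lu(2^I) = (n + 1) / (n + 1 - |I|) and the sets above I
   have Lubell mass (n + 1) / (|I| + 1), in both cases some colour class has
   Lubell mass above (n - 1) / 2 = e, hence contains an induced copy of P.
   Lower bound.  For n <= 2e colour [n] with 2, the sets of size < e with 0 and
   the others with 1: [n] lies in no induced V_2, and every colour class is a
   singleton or lies in e consecutive levels. *)

From HB Require Import structures.
From mathcomp Require Import all_boot all_order all_algebra.
From mathcomp Require Import ring lra zify.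
From Stdlib Require Import Classical_Prop.
Set Implicit Arguments. Unset Strict Implicit. Unset Printing Implicit Defensive.
Import Order.TTheory GRing.Theory Num.Theory.
Local Open Scope ring_scope.

Lemma bin_ratioS (R : numFieldType) (u n k : nat) : (u <= n)%N -> (k <= n)%N ->
  (n - k)%:R * ('C(u, k.+1)%:R / 'C(n, k.+1)%:R) =
  (u - k)%:R * ('C(u, k)%:R / 'C(n, k)%:R) :> R.
Proof.
move=> leun; rewrite leq_eqVlt => /orP[/eqP-> | ltkn].
  by rewrite subnn (eqnP leun) !mul0r.
have binS_eq m : 'C(m, k.+1)%:R = (m - k)%:R * 'C(m, k)%:R / k.+1%:R :> R.
  by rewrite -natrM -mul_bin_left natrM mulrAC divff ?mul1r // pnatr_eq0.
rewrite !binS_eq; field.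
by rewrite addrC natr1 !pnatr_eq0 -!lt0n subn_gt0 bin_gt0 ltkn ltnW.
Qed.

(* With [w k := (n + 1 - k) C(u, k) / C(n, k)], the k-th summand times
   [n + 1 - u] is [w k - w (k + 1)] by [bin_ratioS]: the sum telescopes. *)
Lemma sum_bin_ratio (R : numFieldType) (u n : nat) : (u <= n)%N ->
  \sum_(k < u.+1) ('C(u, k)%:R / 'C(n, k)%:R) = n.+1%:R / (n.+1 - u)%:R :> R.
Proof.
move=> leun.
pose r k : R := 'C(u, k)%:R / 'C(n, k)%:R.
pose w k : R := (n.+1 - k)%:R * r k.
have step k : (k <= u)%N -> (n.+1 - u)%:R * r k = w k - w k.+1.
  move=> leku; rewrite /w subSS bin_ratioS ?(leq_trans leku) // -mulrBl -natrB.
    by congr (_ * _); congr _%:R; lia.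
  lia.
have nu0 : (n.+1 - u)%:R != 0 :> R by rewrite pnatr_eq0 subn_eq0 -ltnNge ltnS.
apply: (mulfI nu0); rewrite mulr_sumr mulrCA divff // mulr1.
rewrite -(big_mkord xpredT (fun k => (n.+1 - u)%:R * r k)) big_nat.
rewrite (eq_bigr (fun k => - (w k.+1 - w k))) => [|k /andP[_ ltku]]; last first.
  by rewrite opprB step.
rewrite sumrN -big_nat telescope_sumr // opprB /w /r subn0 !bin0 bin_small //.
by rewrite !mul0r mulr0 subr0 divr1 mulr1.
Qed.

Lemma sum_subsets_card (R : pzSemiRingType) (T : finType) (I : {set T})
    (f : nat -> R) :
  \sum_(A : {set T} | A \subset I) f #|A| = \sum_(k < #|I|.+1) 'C(#|I|, k)%:R * f k.
Proof.
rewrite (partition_big (fun A : {set T} => inord #|A| : 'I_#|I|.+1) xpredT) //=.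
apply: eq_bigr => k _; rewrite -cards_draws.
rewrite -(sum1_card (mem [set A : {set T} | A \subset I & #|A| == k])).
rewrite natr_sum mulr_suml [LHS]big_mkcond [RHS]big_mkcond /=.
apply: eq_bigr => A _; rewrite inE; case: (boolP (A \subset I)) => //= sAI.
have ->: (inord #|A| == k) = (#|A| == k).
  by rewrite -val_eqE /= inordK // ltnS subset_leq_card.
by case: eqP => [->|]; rewrite ?mul1r.
Qed.

Lemma two_inv_bound (R : realFieldType) (x y : R) : 2 <= x -> 2 <= y ->
  x + y - 3 < 2 * (x + y - (x + y - 1) / x - (x + y - 1) / y).
Proof.
move=> x2 y2.
have xy_gt0 : 0 < x * y by apply: mulr_gt0; lra.
have z_xy : ((x + y - 1) / x + (x + y - 1) / y) * (x * y) = (x + y - 1) * (x + y).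
  by field; apply/andP; split; apply: lt0r_neq0; lra.
have x2y2 : 0 <= (x - 2) * (y - 2) by apply: mulr_ge0; lra.
suff : 2 * ((x + y - 1) / x + (x + y - 1) / y) < x + y + 3 by lra.
move: z_xy; set z := _ + _ => z_xy.
nra.
Qed.

Section Lubell.
Variable n : nat.
Implicit Types (F G : {set {set 'I_n}}) (A I : {set 'I_n}).

Lemma leq_card_ord_set A : (#|A| <= n)%N.
Proof. by have := max_card A; rewrite card_ord. Qed.

Lemma card_ltn_setT A : A != setT -> (#|A| < n)%N.
Proof. by rewrite -properT => /proper_card; rewrite cardsT card_ord. Qed.

Lemma lu_subset F G : F \subset G -> lu F <= lu G.
Proof.
move=> sFG; rewrite /lu [leRHS](big_setID F) /= (setIidPr sFG) lerDl.
by apply: sumr_ge0 => A _; rewrite invr_ge0 ler0n.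
Qed.

Lemma lu_setU F G : lu (F :|: G) <= lu F + lu G.
Proof.
rewrite /lu [leLHS](big_setID F) /= setUK setDUl setDv set0U lerD2l.
exact: lu_subset (subsetDl G F).
Qed.

Lemma lu_set1 A : lu [set A] = ('C(n, #|A|)%:R)^-1.
Proof. by rewrite /lu big_set1. Qed.

Lemma lu_setD1 F A : A \in F -> lu F = ('C(n, #|A|)%:R)^-1 + lu (F :\ A).
Proof. by move=> FA; rewrite /lu (big_setD1 A FA). Qed.

Lemma lu_setC F : lu [set ~: A | A in F] = lu F.
Proof.
rewrite /lu big_imset /=; last by move=> A B _ _; apply: setC_inj.
by apply: eq_bigr => A _; rewrite cardsCs setCK card_ord bin_sub ?leq_card_ord_set.
Qed.

Lemma lu_powerset I : lu (powerset I) = n.+1%:R / (n.+1 - #|I|)%:R.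
Proof.
rewrite -sum_bin_ratio ?leq_card_ord_set // /lu.
under eq_bigl do rewrite powersetE.
exact: (sum_subsets_card I (fun k => ('C(n, k)%:R)^-1)).
Qed.

Lemma lu_upset I : lu [set A : {set 'I_n} | I \subset A] = n.+1%:R / #|I|.+1%:R.
Proof.
have ->: [set A : {set 'I_n} | I \subset A] = [set ~: A | A in powerset (~: I)].
  apply/setP => A; rewrite inE -{2}(setCK A) mem_imset; last exact: setC_inj.
  by rewrite powersetE setCS.
rewrite (lu_setC (powerset (~: I))) lu_powerset cardsCs setCK card_ord.
by rewrite subnBA ?leq_card_ord_set // addSnnS addKn.
Qed.

Lemma lu_setT : lu [set: {set 'I_n}] = n.+1%:R.
Proof. by rewrite -powersetT lu_powerset cardsT card_ord subSnn divr1. Qed.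

Lemma lu_two_cover_heavy F G : (forall A, A != setT -> A \in F :|: G) ->
  (n%:R - 1 < 2 * lu F) \/ (n%:R - 1 < 2 * lu G).
Proof.
move=> cover.
have sT : [set: {set 'I_n}] \subset (F :|: G) :|: [set setT].
  apply/subsetP => A _; rewrite in_setU in_set1.
  by case: eqVneq => [_|/cover ->]; rewrite ?orbT.
have := le_trans (lu_subset sT) (le_trans (lu_setU _ _) (lerD (lu_setU F G) (lexx _))).
rewrite lu_setT lu_set1 cardsT card_ord binn invr1 -natr1 => bound.
by case: (ltrP (n%:R - 1) (2 * lu F)) => ?; [left | right; lra].
Qed.

Lemma lu_comparable_heavy F I : set0 \in F -> (0 < #|I| < n)%N ->
  (forall A, A \notin F -> (A \subset I) || (I \subset A)) -> n%:R - 1 < 2 * lu F.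
Proof.
move=> F0 /andP[I_gt0 I_ltn] cmp.
have cover : [set: {set 'I_n}] \subset
    F :|: ((powerset I :\ set0) :|: [set A : {set 'I_n} | I \subset A]).
  apply/subsetP => A _; rewrite !inE; case: (boolP (A \in F)) => //= nFA.
  by case: eqVneq nFA => [-> | _ /cmp]; rewrite ?F0.
have := le_trans (lu_subset cover) (le_trans (lu_setU _ _) (lerD (lexx _) (lu_setU _ _))).
have pow0 : lu (powerset I :\ set0) = n.+1%:R / (n.+1 - #|I|)%:R - 1.
  rewrite -lu_powerset (@lu_setD1 (powerset I) set0) ?powersetE ?sub0set //.
  by rewrite cards0 bin0 invr1 [1 + _]addrC addrK.
rewrite lu_setT lu_upset pow0.
have := @two_inv_bound rat (n.+1 - #|I|)%:R #|I|.+1%:R.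
have -> : (n.+1 - #|I|)%:R + #|I|.+1%:R = n.+2%:R :> rat.
  by rewrite -natrD; congr _%:R; lia.
have x2 : 2 <= (n.+1 - #|I|)%:R :> rat by rewrite (ler_nat _ 2); lia.
have y2 : 2 <= #|I|.+1%:R :> rat by rewrite (ler_nat _ 2); lia.
move=> /(_ x2 y2); rewrite -[n.+2%:R]natr1 addrK -[n.+1%:R]natr1.
set a := (_ / (n.+1 - #|I|)%:R); set b := (_ / #|I|.+1%:R); lra.
Qed.

End Lubell.

Lemma comparable_core (T : finType) (C : eqType) (col : {set T} -> C)
    (G : {set {set T}}) X0 Y0 :
  X0 \in G -> Y0 \in G -> col X0 != col Y0 ->
  {in G &, forall X Y, col X != col Y -> (X \subset Y) || (Y \subset X)} ->
  exists I : {set T}, [/\ exists2 X, X \in G & X \subset I,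
                          exists2 Y, Y \in G & I \subset Y
                        & {in G, forall A : {set T}, (A \subset I) || (I \subset A)}].
Proof.
move=> GX0 GY0 cX0Y0 cmp.
case: (arg_minnP (fun X : {set T} => #|X|) GX0) => Xm GXm minXm.
pose J Y := (Y \in G) && (col Y != col Xm).
have [Y1 JY1] : exists Y1, J Y1.
  case: (eqVneq (col X0) (col Xm)) => [eX0 | ?]; last by exists X0; apply/andP.
  by exists Y0; rewrite /J GY0 -eX0 eq_sym.
exists (\bigcap_(Y | J Y) Y); split.
- exists Xm => //; apply/bigcapsP => Y /andP[GY cY].
  have /orP[// | sYXm] : (Xm \subset Y) || (Y \subset Xm) by apply: cmp; rewrite 1?eq_sym.
  have /eqP eYXm : Y == Xm by rewrite eqEcard sYXm minXm.
  by rewrite eYXm eqxx in cY.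
- by exists Y1; [case/andP: JY1 | exact: bigcap_inf].
move=> A GA; case: (eqVneq (col A) (col Xm)) => [cA | cA]; last first.
  by rewrite orbC bigcap_inf // /J GA.
case: (boolP (A \subset _)) => //= nAI.
have /existsP[Y /andP[/andP[GY cY] nAY]] : [exists Y, J Y && ~~ (A \subset Y)].
  apply: contraR nAI => /existsPn noY; apply/bigcapsP => Y JY.
  by have := noY Y; rewrite JY negbK.
have /orP[sAY | sYA] : (A \subset Y) || (Y \subset A) by apply: cmp; rewrite ?cA 1?eq_sym.
  by rewrite sAY in nAY.
by apply: subset_trans sYA; apply: bigcap_inf; rewrite /J GY.
Qed.

Lemma no_rainbow_V2_heavy_class n (C : eqType) (c : {set 'I_n} -> C) :
  ~ rainbow_V2 c -> exists a, n%:R - 1 < 2 * lu [set A | c A == a].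
Proof.
move=> noV2; pose a := c set0.
have cmp X Y : c X != a -> c Y != a -> c X != c Y -> (X \subset Y) || (Y \subset X).
  move=> cX cY cXY; apply/negPn/negP; rewrite negb_or => /andP[nXY nYX].
  apply: noV2; exists set0, X, Y; split; rewrite ?proper0 //.
  - by apply: contraNneq cX => ->.
  - by apply: contraNneq cY => ->.
  - by split; rewrite // eq_sym.
pose G := [set A | (c A != a) && (A != setT)].
have class0 : set0 \in [set A | c A == a] by rewrite inE.
case: (boolP [exists X in G, exists Y in G, c X != c Y]) => [|oneG].
  case/exists_inP => X0 GX0 /exists_inP[Y0 GY0 cXY].
  have [|I [[X GX sXI] [Y GY sIY] cmpI]] := comparable_core GX0 GY0 cXY.
    by move=> X Y; rewrite !inE => /andP[cX _] /andP[cY _]; apply: cmp.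
  exists a; apply: (@lu_comparable_heavy _ _ I class0) => [|A].
    move: GX GY; rewrite !inE => /andP[cX _] /andP[_ YT].
    have nX0 : X != set0 by apply: contraNneq cX => ->.
    rewrite (leq_trans _ (subset_leq_card sXI)) ?card_gt0 //=.
    by rewrite (leq_ltn_trans (subset_leq_card sIY)) ?card_ltn_setT.
  rewrite inE => cA; case: (eqVneq A setT) => [-> | AT]; first by rewrite subsetT orbT.
  by apply: cmpI; rewrite inE cA.
pose b := c (odflt set0 [pick X in G]).
have cover A : A != setT -> A \in [set A | c A == a] :|: [set A | c A == b].
  move=> AT; rewrite !inE; case: eqVneq => //= cA.
  have GA : A \in G by rewrite inE cA.
  rewrite /b; case: pickP => [X GX | /(_ A)]; last by rewrite GA.
  apply: contraNT oneG => cAX; apply/exists_inP; exists A => //.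
  by apply/exists_inP; exists X.
by case: (lu_two_cover_heavy cover) => ?; [exists a | exists b].
Qed.

Section InducedCopies.
Variables (d : Order.disp_t) (P : finPOrderType d).

Lemma induced_free_subset n (F G : {set {set 'I_n}}) :
  F \subset G -> induced_free P G -> induced_free P F.
Proof.
move=> sFG; apply: contra => /existsP[f /andP[copy /forallP inF]].
by apply/existsP; exists f; rewrite copy; apply/forallP => x; apply: subsetP sFG _ (inF x).
Qed.

Lemma induced_free_set1 n (A : {set 'I_n}) : (1 < #|P|)%N -> induced_free P [set A].
Proof.
case/card_gt1P => x [y [_ _ nxy]].
apply/negP => /existsP[f /andP[/andP[/injectiveP injf _] /forallP inA]].
by move/eqP: nxy; apply; apply: injf; rewrite (set1P (inA x)) (set1P (inA y)).
Qed.

Lemma levels_free_card_gt0 m : levels_free P m -> (0 < #|P|)%N.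
Proof.
move=> free; rewrite lt0n; apply: contraTneq (free 0 0) => /card0_eq P0.
have nP (x : P) : False by have := P0 x; rewrite !inE.
rewrite negbK; apply/existsP; exists [ffun x => set0].
rewrite -andbA; apply/and3P.
by split; [apply/injectiveP => x | apply/forallP => x ..]; case: (nP x).
Qed.

Lemma mono_PE n (C : eqType) (c : {set 'I_n} -> C) : (0 < #|P|)%N ->
  mono_P P c <-> exists a, ~~ induced_free P [set A | c A == a].
Proof.
case/card_gt0P => x0 _; split.
  case=> f [copy mono]; exists (c (f x0)); rewrite negbK.
  by apply/existsP; exists f; rewrite copy; apply/forallP => x; rewrite inE (mono x x0).
case=> a /negPn/existsP[f /andP[copy /forallP inF]]; exists f; split => // x y.
by move: (inF x) (inF y); rewrite !inE => /eqP-> /eqP->.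
Qed.

Lemma not_induced_free_lu e n (F : {set {set 'I_n}}) :
  unif_lubell_bounded P -> is_e P e -> (0 < n)%N -> e%:R < lu F ->
  ~~ induced_free P F.
Proof.
move=> lub eP n_gt0 e_lt; apply: contraTN e_lt => freeF; rewrite -leNgt.
apply: le_trans (lub e eP n n_gt0).
exact: (le_bigmax_cond _ (fun F => lu F) freeF).
Qed.

Lemma RR_prop_upper e : (0 < #|P|)%N -> unif_lubell_bounded P -> is_e P e ->
  RR_prop P (2 * e + 1).
Proof.
move=> P_gt0 lub eP C c; have [|noV2] := classic (rainbow_V2 c); [by left | right].
have [a heavy] := no_rainbow_V2_heavy_class noV2.
apply/(mono_PE c P_gt0); exists a.
apply: (not_induced_free_lu lub eP); first by rewrite addn1.
by move: heavy; rewrite natrD natrM addrK; lra.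
Qed.

Lemma not_RR_prop_lower e n : (1 < #|P|)%N -> levels_free P e -> (n <= 2 * e)%N ->
  ~ RR_prop P n.
Proof.
move=> P_gt1 free le_n2e RR.
pose c (A : {set 'I_n}) : nat := if A == setT then 2%N else nat_of_bool (e <= #|A|)%N.
case: (RR nat c) => [[A0 [A1 [A2 [pA01 pA02 nA12 nA21 [c01 c02 c12]]]]] | mono].
  have A1T : A1 != setT by apply: contraNneq nA21 => ->; apply: subsetT.
  have A2T : A2 != setT by apply: contraNneq nA12 => ->; apply: subsetT.
  have A0T : A0 != setT by rewrite -properT (proper_sub_trans pA01) ?subsetT.
  move: c01 c02 c12; rewrite /c (negbTE A0T) (negbTE A1T) (negbTE A2T).
  by do 3 case: (e <= #|_|)%N.
have [a /negP not_free] := (mono_PE c (ltnW P_gt1)).1 mono; apply: not_free.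
have [-> | a2] := eqVneq a 2%N.
  apply: induced_free_subset (induced_free_set1 setT P_gt1).
  apply/subsetP => A; rewrite !inE /c.
  by case: (A =P setT) => // _; case: (e <= #|A|)%N.
apply: (induced_free_subset _ (free n (if a == 1%N then e else 0%N))).
apply/subsetP => A; rewrite !inE /c; case: (eqVneq A setT) => [_ | AT /eqP cA].
  by move=> /eqP eq2a; rewrite -eq2a eqxx in a2.
have ltAn : (#|A| < n)%N := card_ltn_setT AT.
(* [levels] unfolds [#|A|] to a different (convertible) term; [set] merges the
   two occurrences so that lia sees a single atom. *)
by case: (leqP e #|A|) cA => le_eA <- /=; move: le_eA ltAn; set k := #|A|; lia.
Qed.

End InducedCopies.

Local Close Scope ring_scope.

Theorem theorem1p7 (d : Order.disp_t) (P : finPOrderType d) (e : nat) :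
  #|P| != 1 ->
  unif_lubell_bounded P ->
  is_e P e ->
  is_RR P (2 * e + 1).
Proof.
move=> P_ne1 lub eP.
have P_gt0 := levels_free_card_gt0 eP.1.
have P_gt1 : (1 < #|P|)%N by rewrite ltn_neqAle eq_sym P_ne1.
split; first exact: RR_prop_upper.
by move=> n; rewrite addn1 ltnS; apply: not_RR_prop_lower eP.1.
Qed.
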